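(* Let $n\ge1$ and let $\mathcal P(n-1,1,2)$ be the set of lattice paths with steps $(1,1)$ (up) and $(1,-1)$ (down) from $(0,0)$ to $(2n,2)$ (so with $n+1$ up steps and $n-1$ down steps); the steps occupy positions $0,1,\dots,2n-1$, the step in position $m$ starting at the vertex reached after $m$ steps. (1) For $k>1$, among the paths in $\mathcal P(n-1,1,2)$ that start with a down step and have exactly $k-1$ even down steps, the number having exactly $j$ even down steps starting on or below the $x$-axis is independent of $j$ for $j=1,\dots,k-1$, and equals $\frac{1}{k-1}\binom{n}{k}\binom{n-1}{k-2}$. (2) Among the paths in $\mathcal P(n-1,1,2)$ that start with an up step and have exactly $k$ even up steps ($k\ge1$), the number having exactly $j$ even up steps starting on or below the $x$-axis is independent of $j$ for $j=1,\dots,k$, and equals $\frac1k\binom{n-1}{k-1}\binom{n}{k-1}$.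
   Context: An even up (down) step is an up (down) step in an even position. A step starts on or below the $x$-axis if its initial vertex has $y$-coordinate $\le0$. *)

From mathcomp Require Import all_boot all_order all_algebra.
Set Implicit Arguments. Unset Strict Implicit. Unset Printing Implicit Defensive.
Import Order.TTheory GRing.Theory Num.Theory.

(* A lattice path with up (1,1) / down (1,-1) steps is a sequence of booleans:
   true = up step, false = down step.  The step in position m (0-based) starts
   at the vertex reached after m steps. *)

Local Open Scope ring_scope.

Definition height (s : seq bool) (m : nat) : int :=
  \sum_(i < m) (if nth false s i then 1 else -1).

Local Close Scope ring_scope.

(* s is in P(n-1,1,2): a path from (0,0) to (2n,2), i.e. 2n steps with n+1 ups. *)
Definition inP (n : nat) (s : seq bool) : bool :=
  (size s == 2 * n) && (count id s == n.+1).

Definition even_steps (b : bool) (s : seq bool) : nat :=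
  count (fun m => ~~ odd m && (nth false s m == b)) (iota 0 (size s)).

Definition even_steps_low (b : bool) (s : seq bool) : nat :=
  count (fun m => [&& ~~ odd m, nth false s m == b & (height s m <= 0)%R])
        (iota 0 (size s)).

(* Group the 2n steps into n pairs (2a, 2a+1).  Rotating a path by 2r steps permutes the
   pairs cyclically and preserves P(n-1,1,2) and the number of even b-steps.  As a path
   rises by 2 over a full period, in the rotation by 2r the even step of pair q starts on or
   below the axis iff (h q, -q) <= (h r, -r) lexicographically, h q being half the height
   reached after 2q steps.  So the number of low even b-steps of that rotation is the rank
   of r among the pairs carrying an even b-step, for a total order: every j in 1..m is
   attained by exactly one rotation starting with b (a cycle lemma).  Double counting the
   pairs (path, rotation) then gives n |S_j| = #{paths with m even b-steps}, and the latter
   number is C(n, #even ups) C(n, #odd ups), even and odd up-positions being independent. *)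

From mathcomp Require Import all_boot all_order all_algebra zify ring.
Import Order.TTheory GRing.Theory Num.Theory.

Set Implicit Arguments.
Unset Strict Implicit.
Unset Printing Implicit Defensive.

Lemma sub_count_ltn (T : eqType) (a1 a2 : pred T) (s : seq T) x :
  subpred a1 a2 -> x \in s -> a2 x -> ~~ a1 x -> count a1 s < count a2 s.
Proof.
move=> sub12 xs a2x a1x.
have -> : count a2 s = count a1 s + count (predD a2 a1) s.
  rewrite -count_predUI (@eq_count _ (predI _ _) pred0) ?count_pred0 ?addn0.
    by apply: eq_count => y /=; case: (boolP (a1 y)) => // /sub12 ->.
  by move=> y /=; case: (a1 y); rewrite ?andbF.
by rewrite -addn1 leq_add2l -has_count; apply/hasP; exists x; rewrite //= a1x.
Qed.

Section Rank.
Variables (T : eqType) (le : rel T).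
Hypotheses (leT_total : total le) (leT_anti : antisymmetric le)
  (leT_trans : transitive le).

Definition rank (l : seq T) (x : T) : nat := count (le^~ x) l.

Lemma rank_ltn l x y : y \in l -> le x y -> x != y -> rank l x < rank l y.
Proof.
move=> yl lexy neqxy; apply: (sub_count_ltn _ yl).
- by move=> z lezx; apply: leT_trans lezx lexy.
- by have := leT_total y y; rewrite orbb.
- by apply: contra neqxy => leyx; apply/eqP/leT_anti; rewrite lexy.
Qed.

Lemma rank_inj l : {in l &, injective (rank l)}.
Proof.
move=> x y xl yl eq_rank; apply/eqP; apply: contraT => neqxy.
case/orP: (leT_total x y) => [lexy | leyx].
- by have := rank_ltn yl lexy neqxy; rewrite eq_rank ltnn.
- have neqyx : y != x by rewrite eq_sym.
  by have := rank_ltn xl leyx neqyx; rewrite eq_rank ltnn.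
Qed.

Lemma rank_mem l x : x \in l -> rank l x \in iota 1 (size l).
Proof.
move=> xl; rewrite mem_iota add1n ltnS count_size andbT -has_count.
by apply/hasP; exists x => //=; have := leT_total x x; rewrite orbb.
Qed.

Lemma count_rank l j : uniq l -> 0 < j <= size l ->
  count (fun x => rank l x == j) l = 1.
Proof.
move=> ul jl; have uniq_ranks : uniq (map (rank l) l).
  by rewrite map_inj_in_uniq //; apply: rank_inj.
have sub_ranks : {subset map (rank l) l <= iota 1 (size l)}.
  by move=> _ /mapP[x xl ->]; apply: rank_mem.
have size_ranks : size (iota 1 (size l)) <= size (map (rank l) l).
  by rewrite size_map size_iota.
have [_ ranks] := uniq_min_size uniq_ranks sub_ranks size_ranks.
rewrite -[LHS]/(count (preim (rank l) (pred1 j)) l) -count_map.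
by rewrite count_uniq_mem // ranks mem_iota add1n ltnS jl.
Qed.
End Rank.

Lemma nth_rot (T : Type) (x0 : T) m (s : seq T) i : m <= size s -> i < size s ->
  nth x0 (rot m s) i = nth x0 s ((i + m) %% size s).
Proof.
move=> le_ms lt_is; rewrite /rot nth_cat size_drop nth_drop.
case: ltnP => [lt_ims | le_ism].
  by rewrite modn_small addnC //; lia.
have -> : i + m = (i - (size s - m)) + size s by lia.
by rewrite modnDr modn_small ?nth_take //; lia.
Qed.

Lemma count_iota_addn_mod n r (a : pred nat) :
  count (fun i => a ((i + r) %% n)) (iota 0 n) = count a (iota 0 n).
Proof.
rewrite -(count_map (fun i => (i + r) %% n)); apply/permP.
suff -> : map (fun i => (i + r) %% n) (iota 0 n) = rot (r %% n) (iota 0 n).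
  by rewrite perm_rot.
apply: (@eq_from_nth _ 0) => [|i]; rewrite size_map ?size_rot //.
rewrite size_iota => ilt; have n_gt0 : 0 < n by lia.
have lt_rn : r %% n < n by rewrite ltn_pmod.
rewrite (nth_map 0) ?size_iota // nth_rot ?size_iota ?(ltnW lt_rn) //.
by rewrite !nth_iota ?ltn_pmod // modnDmr.
Qed.

Lemma count_iota_double n (a : pred nat) : count a (iota 0 (2 * n)) =
  count (fun i => a (2 * i)) (iota 0 n) + count (fun i => a (2 * i).+1) (iota 0 n).
Proof.
elim: n => [|n IH] //.
rewrite -(addn1 n) mulnDr muln1 (iotaD 0 (2 * n) 2) (iotaD 0 n 1) !count_cat IH.
by rewrite /= !add0n !addn0 addnACA.
Qed.

Lemma card_set_ord n (a : pred nat) :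
  #|[set i : 'I_n | a i]| = count a (iota 0 n).
Proof.
by rewrite -sum1dep_card -(big_mkord a (fun _ => 1)) sum1_count /index_iota subn0.
Qed.

Lemma mem_val_enum n (A : {set 'I_n}) (a : 'I_n) :
  (val a \in [seq val x | x in A]) = (a \in A).
Proof. by rewrite mem_map ?mem_enum //; apply: val_inj. Qed.

Definition ups (s : seq bool) (m : nat) : nat := count id (take m s).

Lemma ups_succ s m : ups s m.+1 = ups s m + nth false s m.
Proof.
rewrite /ups; case: (ltnP m (size s)) => [lt_ms | le_sm].
  by rewrite (take_nth false lt_ms) -cats1 count_cat /= addn0.
by rewrite nth_default // !take_oversize ?(leqW le_sm) // addn0.
Qed.

Lemma heightE s m : height s m = ((2 * ups s m)%:Z - m%:Z)%R.
Proof.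
elim: m => [|m IH]; first by rewrite /height big_ord0 /ups take0.
rewrite /height big_ord_recr /= -/(height s m) IH ups_succ.
by case: (nth false s m) => /=; lia.
Qed.

Lemma ups_cat s1 s2 m : ups (s1 ++ s2) m = ups s1 m + ups s2 (m - size s1).
Proof.
rewrite /ups take_cat; case: ltnP => [lt_m1 | le_1m].
  by move/ltnW: lt_m1; rewrite -subn_eq0 => /eqP->; rewrite take0 addn0.
by rewrite (take_oversize le_1m) count_cat.
Qed.

Lemma ups_oversize s m : size s <= m -> ups s m = count id s.
Proof. by move=> le_sm; rewrite /ups take_oversize. Qed.

Lemma ups_rot m m' s : m <= size s -> m' <= size s ->
  ups (rot m s) m' + ups s m = ups (s ++ s) (m + m').
Proof.
move=> le_ms le_m's.
have -> : s ++ s = take m s ++ (rot m s ++ drop m s).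
  by rewrite /rot -catA catA cat_take_drop.
rewrite ups_cat size_takel // addKn ups_cat size_rot.
have -> : m' - size s = 0 by apply/eqP; rewrite subn_eq0.
rewrite [ups (drop m s) 0]/ups take0 addn0 addnC.
by rewrite [ups (take m s) _]/ups take_oversize ?size_takel ?leq_addr.
Qed.

Definition half_height (s : seq bool) (a : nat) : int :=
  ((ups s (2 * a))%:Z - a%:Z)%R.

Lemma height_double_le0 s a :
  (height s (2 * a) <= 0)%R = (half_height s a <= 0)%R.
Proof. by rewrite heightE /half_height; apply/idP/idP; lia. Qed.

(* In the rotation starting at pair r, a pair q < r is reached only after wrapping around,
   one level higher; hence ties with r count as low only for q >= r. *)
Definition below (s : seq bool) (q r : nat) : bool :=
  (half_height s q < half_height s r)%R ||
  ((half_height s q == half_height s r) && (r <= q)).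

Lemma below_total s : total (below s).
Proof. by move=> q r; rewrite /below; case: (ltngtP q r); lia. Qed.

Lemma below_anti s : antisymmetric (below s).
Proof. by move=> q r; rewrite /below; lia. Qed.

Lemma below_trans s : transitive (below s).
Proof. by move=> q r t; rewrite /below; lia. Qed.

Lemma half_height_rot_le0 n s r a :
  size s = 2 * n -> count id s = n.+1 -> r < n -> a < n ->
  (half_height (rot (2 * r) s) a <= 0)%R = below s ((a + r) %% n) r.
Proof.
move=> size_s count_s lt_rn lt_an.
have := @ups_rot (2 * r) (2 * a) s; rewrite ups_cat size_s.
move=> /(_ ltac:(lia) ltac:(lia)) ups_rs; rewrite /below /half_height.
case: (ltnP (a + r) n) => [lt_arn | le_nar].
- have e0 : 2 * r + 2 * a - 2 * n = 0 by lia.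
  have e : 2 * r + 2 * a = 2 * (a + r) by lia.
  rewrite e0 e [ups s 0]/ups take0 addn0 in ups_rs.
  rewrite modn_small //; apply/idP/idP; lia.
- have e : 2 * r + 2 * a - 2 * n = 2 * (a + r - n) by lia.
  rewrite e (@ups_oversize s (2 * r + 2 * a)) ?size_s ?count_s in ups_rs;
    last by lia.
  have -> : a + r = a + r - n + n by lia.
  rewrite modnDr modn_small; last by lia.
  apply/idP/idP; lia.
Qed.

Definition even_step (b : bool) (s : seq bool) (a : nat) : bool :=
  nth false s (2 * a) == b.

Lemma count_even_iota n (a : pred nat) :
  count (fun i => ~~ odd i && a i) (iota 0 (2 * n)) =
  count (fun i => a (2 * i)) (iota 0 n).
Proof.
rewrite count_iota_double [X in _ + X](@eq_count _ _ pred0) => [|i].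
  by rewrite count_pred0 addn0; apply: eq_count => i; rewrite /= oddM.
by rewrite oddS oddM.
Qed.

Lemma even_stepsE n b s : size s = 2 * n ->
  even_steps b s = count (even_step b s) (iota 0 n).
Proof.
move=> size_s; rewrite /even_steps size_s.
exact: (count_even_iota n (fun m => nth false s m == b)).
Qed.

Lemma even_steps_lowE n b s : size s = 2 * n ->
  even_steps_low b s =
  count (fun a => even_step b s a && (half_height s a <= 0)%R) (iota 0 n).
Proof.
move=> size_s; rewrite /even_steps_low size_s.
rewrite (count_even_iota n (fun m => (nth false s m == b) && (height s m <= 0)%R)).
by apply: eq_count => a; rewrite /= height_double_le0.
Qed.

Lemma even_step_rot n b s r a : size s = 2 * n -> r < n -> a < n ->
  even_step b (rot (2 * r) s) a = even_step b s ((a + r) %% n).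
Proof.
move=> size_s lt_rn lt_an.
by rewrite /even_step nth_rot size_s -?mulnDr -?muln_modr //; lia.
Qed.

Lemma head_rot n b s r : size s = 2 * n -> r < n ->
  (head (~~ b) (rot (2 * r) s) == b) = even_step b s r.
Proof.
move=> size_s lt_rn; have n_gt0 : 0 < n by lia.
rewrite -nth0 (set_nth_default false) ?size_rot ?size_s; last by lia.
by have := even_step_rot b size_s lt_rn n_gt0; rewrite /even_step muln0 modn_small.
Qed.

Lemma inP_rot n m s : inP n (rot m s) = inP n s.
Proof.
have /permP count_rot : perm_eq (rot m s) s by rewrite perm_rot.
by rewrite /inP size_rot count_rot.
Qed.

Lemma even_steps_rot n b s r : size s = 2 * n -> r < n ->
  even_steps b (rot (2 * r) s) = even_steps b s.
Proof.
move=> size_s lt_rn; rewrite !(even_stepsE (n := n)) ?size_rot //.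
rewrite -[RHS](count_iota_addn_mod n r); apply: eq_in_count => a.
by rewrite mem_iota => /andP[_ lt_an]; apply: even_step_rot.
Qed.

Lemma even_steps_low_rot n b s r : inP n s -> r < n ->
  even_steps_low b (rot (2 * r) s) =
  rank (below s) (filter (even_step b s) (iota 0 n)) r.
Proof.
case/andP => /eqP size_s /eqP count_s lt_rn.
rewrite (even_steps_lowE (n := n)) ?size_rot // /rank count_filter.
rewrite -[RHS](count_iota_addn_mod n r); apply: eq_in_count => a.
rewrite mem_iota => /andP[_ lt_an] /=.
by rewrite (even_step_rot _ size_s) // (half_height_rot_le0 size_s) // andbC.
Qed.

Definition paths_with_even_steps (n : nat) (b : bool) (m : nat) (s : seq bool) : bool :=
  inP n s && (even_steps b s == m).

Definition paths_with_low (n : nat) (b : bool) (m j : nat) (s : seq bool) : bool :=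
  [&& inP n s, head (~~ b) s == b, even_steps b s == m & even_steps_low b s == j].

Lemma paths_with_low_rot n b (m j : nat) s r : inP n s -> r < n ->
  paths_with_low n b m j (rot (2 * r) s) =
  [&& even_steps b s == m, even_step b s r &
      rank (below s) (filter (even_step b s) (iota 0 n)) r == j].
Proof.
move=> s_inP lt_rn; have /andP[/eqP size_s _] := s_inP.
rewrite /paths_with_low inP_rot s_inP (head_rot _ size_s) //.
by rewrite (even_steps_rot _ size_s) // (even_steps_low_rot _ s_inP) //= andbCA.
Qed.

Lemma sum_rot_paths_with_low n b (m j : nat) (t : (2 * n).-tuple bool) :
  0 < j <= m ->
  \sum_(r < n | paths_with_low n b m j (rot (2 * r) t)) 1 =
  paths_with_even_steps n b m t.
Proof.
move=> jm.
rewrite -(big_mkord (fun r => paths_with_low n b m j (rot (2 * r) t)) (fun _ => 1)).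
rewrite sum1_count /index_iota subn0 /paths_with_even_steps.
have [t_inP | t_notP] /= := boolP (inP n t); last first.
  rewrite (@eq_count _ _ pred0) ?count_pred0 // => r.
  by rewrite /paths_with_low inP_rot (negbTE t_notP).
have /andP[/eqP size_t _] := t_inP.
set marked := filter (even_step b t) (iota 0 n).
rewrite (@eq_in_count _ _ (fun r => [&& even_steps b t == m, even_step b t r &
    rank (below t) marked r == j])); last first.
  by move=> r; rewrite mem_iota => /andP[_ lt_rn]; apply: paths_with_low_rot.
case: eqP => [even_t | _] /=; last by rewrite count_pred0.
under eq_count do rewrite andbC.
rewrite -count_filter count_rank ?filter_uniq ?iota_uniq //.
- exact: below_total.
- exact: below_anti.
- exact: below_trans.
by rewrite size_filter -(even_stepsE _ size_t) even_t.
Qed.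

Lemma card_paths_with_low n b (m j : nat) : 0 < j <= m ->
  #|[set t : (2 * n).-tuple bool | paths_with_low n b m j t]| * n =
  #|[set t : (2 * n).-tuple bool | paths_with_even_steps n b m t]|.
Proof.
move=> jm; set S := [set t : (2 * n).-tuple bool | paths_with_low n b m j t].
have card_shift (r : 'I_n) : #|S| =
    \sum_(t : (2 * n).-tuple bool | paths_with_low n b m j (rot (2 * r) t)) 1.
  have rot_tuple_inj : injective (@rot_tuple (2 * n) (2 * r) bool).
    by move=> t1 t2 /(congr1 val) /rot_inj /val_inj.
  rewrite sum1dep_card -(card_preimset S rot_tuple_inj); apply: eq_card => t.
  by rewrite !inE.
rewrite -[n in _ * n]card_ord (mulnC #|S|) -sum_nat_const.
rewrite (eq_bigr _ (fun r _ => card_shift r)).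
rewrite (exchange_big_dep predT) //= -sum1dep_card [RHS]big_mkcond.
by apply: eq_bigr => t _; rewrite sum_rot_paths_with_low //; case: paths_with_even_steps.
Qed.

Section EvenOddUps.
Variable n : nat.

Definition even_ups (t : (2 * n).-tuple bool) : {set 'I_n} :=
  [set a : 'I_n | nth false t (2 * a)].
Definition odd_ups (t : (2 * n).-tuple bool) : {set 'I_n} :=
  [set a : 'I_n | nth false t (2 * a).+1].

Lemma card_even_ups_le (t : (2 * n).-tuple bool) : #|even_ups t| <= n.
Proof. by rewrite -[X in _ <= X](card_ord n) max_card. Qed.

Lemma card_odd_ups_le (t : (2 * n).-tuple bool) : #|odd_ups t| <= n.
Proof. by rewrite -[X in _ <= X](card_ord n) max_card. Qed.

Lemma count_ups (t : (2 * n).-tuple bool) : count id t = #|even_ups t| + #|odd_ups t|.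
Proof.
rewrite (card_set_ord n (fun a => nth false t (2 * a))).
rewrite (card_set_ord n (fun a => nth false t (2 * a).+1)) -count_iota_double.
by rewrite -{1}(mkseq_nth false t) size_tuple count_map.
Qed.

Lemma even_steps_true (t : (2 * n).-tuple bool) : even_steps true t = #|even_ups t|.
Proof.
rewrite (even_stepsE _ (size_tuple t)) (card_set_ord n (fun a => nth false t (2 * a))).
by apply: eq_count => a; rewrite /even_step eqb_id.
Qed.

Lemma even_steps_false (t : (2 * n).-tuple bool) : even_steps false t = n - #|even_ups t|.
Proof.
rewrite (even_stepsE _ (size_tuple t)) (card_set_ord n (fun a => nth false t (2 * a))).
rewrite -[n in n - _](size_iota 0 n) -(count_predC (fun a => nth false t (2 * a))) addKn.
by apply: eq_count => a; rewrite /even_step eqbF_neg.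
Qed.

Definition split_ups (t : (2 * n).-tuple bool) := (even_ups t, odd_ups t).

Definition interleave (p : {set 'I_n} * {set 'I_n}) : (2 * n).-tuple bool :=
  [tuple of map (fun i => i./2 \in [seq val a | a in if odd i then p.2 else p.1])
                (iota 0 (2 * n))].

Lemma split_upsK : cancel split_ups interleave.
Proof.
move=> t; apply: eq_from_tnth => i.
rewrite !(tnth_nth false) /= (nth_map 0) ?size_iota //.
have lt_half : i./2 < n by rewrite ltn_half_double -mul2n.
rewrite nth_iota // add0n (mem_val_enum _ (Ordinal lt_half)).
by case: ifP => odd_i; rewrite inE /= -[in RHS](odd_double_half i) odd_i -mul2n.
Qed.

Lemma interleaveK : cancel interleave split_ups.
Proof.
case=> E O; congr (_, _); apply/setP => a; have lt_an := ltn_ord a.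
- rewrite inE /= (nth_map 0) ?nth_iota ?size_iota; try lia.
  by rewrite add0n oddM mul2n doubleK mem_val_enum.
- rewrite inE /= (nth_map 0) ?nth_iota ?size_iota; try lia.
  by rewrite add0n oddS oddM mul2n /= uphalf_double mem_val_enum.
Qed.

Lemma card_tuples_by_ups (x y : nat) :
  #|[set t : (2 * n).-tuple bool | (#|even_ups t| == x) && (#|odd_ups t| == y)]| =
  'C(n, x) * 'C(n, y).
Proof.
set D := setX [set A : {set 'I_n} | #|A| == x] [set A : {set 'I_n} | #|A| == y].
have -> : [set t | (#|even_ups t| == x) && (#|odd_ups t| == y)] = interleave @: D.
  by rewrite (can2_imset_pre _ interleaveK split_upsK); apply/setP => t; rewrite !inE.
by rewrite (card_imset _ (can_inj interleaveK)) cardsX !card_draws card_ord.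
Qed.

End EvenOddUps.

Lemma card_paths_with_even_ups n m :
  #|[set t : (2 * n).-tuple bool | paths_with_even_steps n true m t]| =
  'C(n, m) * 'C(n, n.+1 - m).
Proof.
rewrite -card_tuples_by_ups; apply: eq_card => t; rewrite !inE.
rewrite /paths_with_even_steps /inP size_tuple count_ups even_steps_true /=.
have := card_even_ups_le t; rewrite eqxx /= => le_n.
by apply/idP/idP; lia.
Qed.

Lemma card_paths_with_even_downs n m :
  #|[set t : (2 * n).-tuple bool | paths_with_even_steps n false m t]| =
  'C(n, n - m) * 'C(n, m.+1).
Proof.
rewrite -card_tuples_by_ups; apply: eq_card => t; rewrite !inE.
rewrite /paths_with_even_steps /inP size_tuple count_ups even_steps_false /=.
have := card_even_ups_le t; have := card_odd_ups_le t; rewrite eqxx /= => le_odd le_even.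
by apply/idP/idP; lia.
Qed.

Lemma mul_bin_sub_succ n m : 'C(n, n - m) * 'C(n, m.+1) = 'C(n, m) * 'C(n, m.+1).
Proof.
have [le_mn | lt_nm] := leqP m n; first by rewrite bin_sub.
by rewrite (@bin_small n m.+1) ?muln0 // ltnS ltnW.
Qed.

Lemma natr_bin_quotient (S n l c : nat) : 0 < n -> S * n = 'C(n, l.+1) * c ->
  (S%:R : rat) = (l.+1%:R^-1 * ('C(n.-1, l) * c)%:R)%R.
Proof.
move=> n_gt0 S_n.
have -> : 'C(n.-1, l) * c = S * l.+1.
  apply/eqP; rewrite -(eqn_pmul2l n_gt0) mulnA mul_bin_diag; apply/eqP.
  by rewrite -mulnA -S_n; ring.
by rewrite natrM mulrC mulfK // pnatr_eq0.
Qed.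

Theorem theorem12 (n : nat) : 1 <= n ->
  (forall k j : nat, 1 < k -> 1 <= j <= k - 1 ->
     (#|[set t : (2 * n).-tuple bool |
          [&& inP n t, head true t == false,
              even_steps false t == k - 1 & even_steps_low false t == j]]|%:R
        : rat)
     = ((k - 1)%:R^-1 * ('C(n, k) * 'C(n - 1, k - 2))%:R)%R) /\
  (forall k j : nat, 1 <= k -> 1 <= j <= k ->
     (#|[set t : (2 * n).-tuple bool |
          [&& inP n t, head false t == true,
              even_steps true t == k & even_steps_low true t == j]]|%:R
        : rat)
     = (k%:R^-1 * ('C(n - 1, k - 1) * 'C(n, k - 1))%:R)%R).
Proof.
move=> n_gt0; split=> k j k_gt j_range.
- have [l def_k] : exists l, k = l.+2 by exists k.-2; lia.
  rewrite {}def_k !subSS !subn0 in j_range *; rewrite subn1 (mulnC 'C(n, _)).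
  apply: natr_bin_quotient n_gt0 _.
  rewrite (card_paths_with_low n false j_range).
  by rewrite card_paths_with_even_downs mul_bin_sub_succ.
- have [l def_k] : exists l, k = l.+1 by exists k.-1; lia.
  rewrite {}def_k subSS subn0 subn1 in j_range *.
  apply: natr_bin_quotient n_gt0 _.
  rewrite (card_paths_with_low n true j_range).
  by rewrite card_paths_with_even_ups subSS mulnC mul_bin_sub_succ mulnC.
Qed.
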